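(* Let $\Delta$ be a $d$-dimensional pure simplicial forest. Then for every $i<d$, the $(i,d)$-incidence complex $H_\Delta(i,d)$ of $\Delta$ is a simplicial forest.
   Context: A facet $F$ of a simplicial complex $\Delta$ is a leaf if either $F$ is the only facet, or there is a facet $G\neq F$ with $F\cap F'\subseteq F\cap G$ for every facet $F'\neq F$. $\Delta$ is a simplicial tree if it is connected and every subcomplex generated by a nonempty subset of its facets has a leaf; a simplicial forest if each connected component is a simplicial tree. $\Delta$ is pure if all facets have the same dimension. The $(i,j)$-incidence complex $H_\Delta(i,j)$ is the simplicial complex whose vertex set is the set of $i$-dimensional faces of $\Delta$, and whose facets are exactly the sets of the form $\{\tau:\tau\subset\sigma,\ \dim\tau=i\}$ for $\sigma$ a $j$-dimensional face of $\Delta$. *)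

From mathcomp Require Import all_boot.
Set Implicit Arguments. Unset Strict Implicit. Unset Printing Implicit Defensive.

(* A (finite) simplicial complex on the vertex type U is represented by its
   set of facets fs : {set {set U}} (the faces are the subsets of facets).
   A face of cardinality k has dimension k-1. *)

Section SimplicialComplexes.
Variable U : finType.

Definition facet_antichain (fs : {set {set U}}) : Prop :=
  forall F G, F \in fs -> G \in fs -> F \subset G -> F = G.

Definition is_leaf (fs : {set {set U}}) (F : {set U}) : bool :=
  (F \in fs) &&
  ((fs == [set F]) ||
   [exists G in fs, (G != F) &&
      [forall F' in fs, (F' != F) ==> (F :&: F' \subset F :&: G)]]).

Definition facet_adj (fs : {set {set U}}) : rel {set U} :=
  fun F G => [&& F \in fs, G \in fs & F :&: G != set0].

Definition sc_connected (fs : {set {set U}}) : Prop :=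
  forall F G, F \in fs -> G \in fs -> connect (facet_adj fs) F G.

Definition simplicial_tree (fs : {set {set U}}) : Prop :=
  sc_connected fs /\
  forall C : {set {set U}}, C \subset fs -> C != set0 ->
    exists F, is_leaf C F.

Definition component (fs : {set {set U}}) (F : {set U}) : {set {set U}} :=
  [set G in fs | connect (facet_adj fs) F G].

Definition simplicial_forest (fs : {set {set U}}) : Prop :=
  forall F, F \in fs -> simplicial_tree (component fs F).

Definition pure_dim (fs : {set {set U}}) (d : nat) : Prop :=
  forall F, F \in fs -> #|F| = d.+1.

Definition faces_of_dim (fs : {set {set U}}) (j : nat) : {set {set U}} :=
  [set s : {set U} | (#|s| == j.+1) && [exists F in fs, s \subset F]].

Definition incidence_complex (fs : {set {set U}}) (i j : nat)
  : {set {set {set U}}} :=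
  [set [set t : {set U} | (t \subset s) && (#|t| == i.+1)]
     | s : {set U} in faces_of_dim fs j].

End SimplicialComplexes.

From mathcomp Require Import all_boot.
Set Implicit Arguments. Unset Strict Implicit. Unset Printing Implicit Defensive.

(* For a pure d-dimensional complex the facets of H(i,d) are the sets S F of
   (i+1)-subsets of the facets F.  The map S is injective on facets (S F covers
   F), commutes with intersections and sends the empty set to itself.  Any such
   map sends leaves to leaves, and facets of the image that meet come from
   facets that meet, so every subcomplex of a component of H(i,d) is the image
   of a subcomplex of a component of the forest, whose leaf it inherits. *)

Lemma connect_homo (A B : finType) (e : rel A) (e' : rel B) (f : A -> B) :
  {homo f : x y / e x y >-> e' x y} ->
  {homo f : x y / connect e x y >-> connect e' x y}.
Proof.
move=> fe x _ /connectP[p ep ->]; elim: p x ep => [|y p IHp] x /=.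
  by rewrite connect0.
by case/andP=> /fe/connect1 exy /IHp; apply: connect_trans.
Qed.

Section Complexes.
Variable U : finType.
Implicit Types (fs C : {set {set U}}) (A B F G : {set U}).

Lemma facet_adj_sym fs : symmetric (facet_adj fs).
Proof. by move=> F G; rewrite /facet_adj setIC andbCA. Qed.

Lemma connect_in_component fs F G :
  connect (facet_adj fs) F G -> connect (facet_adj (component fs F)) F G.
Proof.
case/connectP=> p; elim/last_ind: p G => [|p X IHp] G /=; first by move=> _ ->.
rewrite rcons_path last_rcons => /andP[Fp adjX] ->{G}.
apply: connect_trans (IHp _ Fp erefl) (connect1 _).
have cFX : connect (facet_adj fs) F (last F p).
  by apply: (path_connect Fp); rewrite mem_last.
have cFX' : connect (facet_adj fs) F X := connect_trans cFX (connect1 adjX).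
move: adjX; rewrite /facet_adj !inE => /and3P[-> -> ->].
by rewrite cFX cFX'.
Qed.

Lemma sc_connected_component fs F : sc_connected (component fs F).
Proof.
move=> G H; rewrite !inE => /andP[_ /connect_in_component cFG].
move=> /andP[_ /connect_in_component cFH].
apply: connect_trans cFH.
by rewrite (sym_connect_sym (@facet_adj_sym _)).
Qed.

Definition subsets_of_card A k :=
  [set t : {set U} | (t \subset A) && (#|t| == k)].

Lemma subsets_of_cardI k :
  {morph subsets_of_card^~ k : A B / A :&: B}.
Proof.
by move=> A B; apply/setP=> t; rewrite !inE subsetI andbACA andbb.
Qed.

Lemma subsets_of_card0 k : 0 < k -> subsets_of_card set0 k = set0.
Proof.
move=> k_gt0; apply/setP=> t; rewrite !inE subset0.
by case: eqP => // ->; rewrite cards0 eq_sym; apply/negbTE; rewrite -lt0n.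
Qed.

Lemma cover_subsets_of_card A k :
  0 < k <= #|A| -> cover (subsets_of_card A k) = A.
Proof.
case: k => // k /= le_kA; apply/setP=> x; apply/bigcupP/idP.
  by case=> t; rewrite inE => /andP[tA _] /(subsetP tA).
move=> xA.
have : 0 < #|[set B : {set U} | B \subset A :\ x & #|B| == k]|.
  have cardA : #|A| = #|A :\ x|.+1 by rewrite (cardsD1 x A) xA.
  by rewrite cards_draws bin_gt0 -ltnS -cardA.
case/card_gt0P=> B; rewrite inE => /andP[BAx /eqP cardB].
have xB : x \notin B by apply/negP=> /(subsetP BAx); rewrite !inE eqxx.
exists (x |: B); last by rewrite setU11.
rewrite inE subUset sub1set xA (subset_trans BAx (subD1set A x)).
by rewrite cardsU1 xB cardB /= add1n.
Qed.

Lemma faces_of_dim_pure fs d : pure_dim fs d -> faces_of_dim fs d = fs.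
Proof.
move=> pure; apply/setP=> s; rewrite inE; apply/andP/idP.
  case=> /eqP cs /existsP[F /andP[Ffs sF]].
  suff -> : s = F by [].
  by apply/eqP; rewrite eqEcard sF cs (pure _ Ffs) leqnn.
move=> sfs; rewrite (pure _ sfs); split=> //.
by apply/existsP; exists s; rewrite sfs /=.
Qed.

Lemma incidence_complex_pure fs i d : pure_dim fs d ->
  incidence_complex fs i d = [set subsets_of_card F i.+1 | F in fs].
Proof. by move=> pure; rewrite /incidence_complex faces_of_dim_pure. Qed.

End Complexes.

Section MeetMorphism.
Variables (U V : finType) (phi : {set U} -> {set V}).
Hypothesis phiI : {morph phi : A B / A :&: B}.
Hypothesis phi0 : phi set0 = set0.
Implicit Types (fs C : {set {set U}}) (A B F G : {set U}).

Lemma meet_morph_subset A B : A \subset B -> phi A \subset phi B.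
Proof. by move=> /setIidPl AB; rewrite -AB phiI subsetIr. Qed.

Lemma is_leaf_imset C F :
  {in C &, injective phi} -> is_leaf C F -> is_leaf (phi @: C) (phi F).
Proof.
move=> phi_inj /andP[FC]; rewrite /is_leaf imset_f //=.
case/orP=> [/eqP-> | /existsP[G /and3P[GC GF /forallP leafF]]].
  by rewrite imset_set1 eqxx.
apply/orP; right; apply/existsP; exists (phi G); rewrite imset_f //=.
apply/andP; split; first by apply: contra GF => /eqP/phi_inj-> //; apply/eqP.
apply/forall_inP=> _ /imsetP[F' F'C ->]; apply/implyP=> F'F.
have F'F_neq : F' != F by apply: contra F'F => /eqP->.
have /implyP/(_ F'C)/implyP/(_ F'F_neq) := leafF F'.
by rewrite -!phiI; apply: meet_morph_subset.
Qed.

Variables (psi : {set V} -> {set U}) (fs : {set {set U}}).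
Hypothesis phiK : {in fs, cancel phi psi}.

Lemma facet_adj_imset : {homo psi : Y Z /
  facet_adj (phi @: fs) Y Z >-> facet_adj fs Y Z}.
Proof.
move=> _ _ /and3P[/imsetP[A Afs ->] /imsetP[B Bfs ->]].
rewrite -phiI /facet_adj !phiK // Afs Bfs /=.
by apply: contraNN => /eqP->; rewrite phi0.
Qed.

Lemma component_imset F Y : F \in fs ->
  Y \in component (phi @: fs) (phi F) ->
  exists2 G, G \in component fs F & Y = phi G.
Proof.
move=> Ffs; rewrite inE => /andP[/imsetP[G Gfs ->]].
move=> /(connect_homo facet_adj_imset).
by rewrite !phiK // => cFG; exists G; rewrite // inE Gfs.
Qed.

Lemma simplicial_forest_imset :
  simplicial_forest fs -> simplicial_forest (phi @: fs).
Proof.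
move=> forest _ /imsetP[F0 F0fs ->]; split; first exact: sc_connected_component.
move=> C CK C_neq0.
set D := [set G in component fs F0 | phi G \in C].
have phiD : phi @: D = C.
  apply/setP=> Y; apply/imsetP/idP => [[G] | YC].
    by rewrite inE => /andP[_ ?] ->.
  have [G GK YG] := component_imset F0fs (subsetP CK Y YC).
  by exists G; rewrite // inE GK -YG.
have DK : D \subset component fs F0.
  by apply/subsetP=> G; rewrite inE => /andP[].
have D_neq0 : D != set0.
  by apply: contraNneq C_neq0 => D0; rewrite -phiD D0 imset0.
have [F leafF] := (forest F0 F0fs).2 D DK D_neq0.
exists (phi F); rewrite -phiD; apply: is_leaf_imset leafF.
apply: (can_in_inj (g := psi)) => G /(subsetP DK); rewrite inE => /andP[Gfs _].
exact: phiK.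
Qed.

End MeetMorphism.

Theorem proposition4p6 (T : finType) (fs : {set {set T}}) (d i : nat) :
  facet_antichain fs ->
  fs != set0 ->
  pure_dim fs d ->
  simplicial_forest fs ->
  i < d ->
  simplicial_forest (incidence_complex fs i d).
Proof.
move=> _ _ pure forest lt_id.
rewrite (incidence_complex_pure i pure).
have phiK : {in fs, cancel (fun F => subsets_of_card F i.+1) cover}.
  move=> F /pure cardF; apply: cover_subsets_of_card.
  by rewrite cardF !ltnS leq0n (ltnW lt_id).
exact (simplicial_forest_imset (subsets_of_cardI i.+1)
  (subsets_of_card0 T (ltn0Sn i)) phiK forest).
Qed.
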